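(* In the setting of the context, $q_B=\tilde q=q|_B$ and $q_A=q|_A$, and $E_{M_1}(q(c))=q_A(E_{M_1}(c))$ for all $c\in C$.
   Context: $k$ is a field; $C_R(S)=\{r\in R:rs=sr\ \forall s\in S\}$. $N\subseteq M$ is a strongly separable, irreducible extension of $k$-algebras: $C_M(N)=k1$ and there are an $N$-bimodule map $E:M\to N$ and $x_1,\dots,x_n,y_1,\dots,y_n\in M$ with $\sum_iE(mx_i)y_i=m=\sum_ix_iE(y_im)$ for all $m\in M$, $E(1)\neq0$, $\sum_ix_iy_i\neq0$; normalized so that $E(1)=1$, whence $\sum_ix_iy_i=\lambda^{-1}1$ with $0\neq\lambda\in k$. Basic construction: given $S\subseteq R$, an $S$-bimodule map $E_S:R\to S$ with $E_S(1)=1$ and $r_i,s_i\in R$ with $\sum_iE_S(rr_i)s_i=r=\sum_ir_iE_S(s_ir)$ and $\sum_ir_is_i=\lambda^{-1}1$, set $R_1=R\otimes_SR$ with product $(a\otimes b)(c\otimes d)=aE_S(bc)\otimes d$, unit $\sum_ir_i\otimes s_i$, $R\subseteq R_1$ via $r\mapsto\sum_irr_i\otimes s_i$, $E_R:R_1\to R$, $a\otimes b\mapsto\lambda ab$; then $E_R$, $\lambda^{-1}r_i\otimes1$, $1\otimes s_i$ satisfy the same conditions with the same $\lambda$. From $(N\subseteq M,E)$ get $M_1,E_M$; from $(M\subseteq M_1,E_M)$ get $M_2,E_{M_1}$. Let $A=C_{M_1}(N)$, $B=C_{M_2}(M)$, $C=C_{M_2}(N)$. Depth 2 is assumed: $M_1$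 is free as right $M$-module with basis in $A$, $M_2$ free as right $M_1$-module with basis in $B$. Let $F=E_M\circ E_{M_1}$; on $C$ it takes values in $C_M(N)=k1\cong k$ and is a faithful linear functional on $C$; $E_M|_A$ is a faithful functional on $A$ and $E_{M_1}|_B$ a faithful functional on $B$ (values in $k1$). Nakayama automorphisms: $q:C\to C$ is defined by $F(q(c)c')=F(c'c)$ for all $c,c'\in C$; $q_A:A\to A$ by $E_M(q_A(a)a')=E_M(a'a)$ for all $a,a'\in A$; $q_B:B\to B$ by $E_{M_1}(q_B(b)b')=E_{M_1}(b'b)$ for all $b,b'\in B$; and $\tilde q:B\to B$ by $\hat F(\tilde q(b)x)=\hat F(xb)$ for all $b\in B$, $x\in M_2$, where $\hat F=E_M\circ E_{M_1}:M_2\to M$. Note $E_{M_1}(C)\subseteq A$. *)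

From HB Require Import structures.
From mathcomp Require Import all_boot all_order all_algebra.
Set Implicit Arguments. Unset Strict Implicit. Unset Printing Implicit Defensive.
Import GRing.Theory.
Local Open Scope ring_scope.

Section BasicDefs.
Variable k : fieldType.

Definition klinear (U V : lmodType k) (f : U -> V) : Prop :=
  forall (a : k) (u v : U), f (a *: u + v) = a *: f u + f v.

Definition is_subalg (R : algType k) (S : R -> Prop) : Prop :=
  S 1 /\
  (forall u v, S u -> S v -> S (u + v)) /\
  (forall u v, S u -> S v -> S (u * v)) /\
  (forall (a : k) u, S u -> S (a *: u)).

Definition centralizer (R : algType k) (S : R -> Prop) : R -> Prop :=
  fun r => forall s, S s -> r * s = s * r.

(* A strongly separable (normalized) extension S ⊆ R with conditional
   expectation ES : R -> S (written as a map R -> R with values in S),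
   quasi-basis (xs, ys) and index constant lam:
   ES is an S-bimodule map, ES 1 = 1,
   sum_i ES(r xs_i) ys_i = r = sum_i xs_i ES(ys_i r), sum_i xs_i ys_i = lam^-1 1. *)
Definition strongly_separable (R : algType k) (S : R -> Prop) (ES : R -> R)
    (n : nat) (xs ys : 'I_n -> R) (lam : k) : Prop :=
  (forall r, S (ES r)) /\
  klinear ES /\
  (forall s1 r s2, S s1 -> S s2 -> ES (s1 * r * s2) = s1 * ES r * s2) /\
  ES 1 = 1 /\
  (forall r, \sum_(i < n) ES (r * xs i) * ys i = r) /\
  (forall r, \sum_(i < n) xs i * ES (ys i * r) = r) /\
  \sum_(i < n) xs i * ys i = lam^-1 *: 1 /\
  lam != 0.

Definition bc_incl (R R1 : algType k) (t : R -> R -> R1) (n : nat)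
    (xs ys : 'I_n -> R) (r : R) : R1 :=
  \sum_(i < n) t (r * xs i) (ys i).

(* (R1, t, ER) is the basic construction of (S ⊆ R, ES, xs, ys, lam):
   - t : R × R -> R1 is k-bilinear and S-balanced, and (R1, t) is the tensor
     product R ⊗_S R (universal property: every S-balanced k-bilinear map
     factors through a k-linear map, and R1 is spanned by the a ⊗ b);
   - the product of R1 is (a⊗b)(c⊗d) = a ES(bc) ⊗ d, its unit is sum_i xs_i⊗ys_i;
   - ER : R1 -> R is the k-linear map a⊗b |-> lam a b. *)
Definition basic_construction (R : algType k) (S : R -> Prop) (ES : R -> R)
    (n : nat) (xs ys : 'I_n -> R) (lam : k)
    (R1 : algType k) (t : R -> R -> R1) (ER : R1 -> R) : Prop :=
  (forall (a : k) u v w, t (a *: u + v) w = a *: t u w + t v w) /\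
  (forall (a : k) u v w, t u (a *: v + w) = a *: t u v + t u w) /\
  (forall u s v, S s -> t (u * s) v = t u (s * v)) /\
  (forall (V : lmodType k) (f : R -> R -> V),
        (forall (a : k) u v w, f (a *: u + v) w = a *: f u w + f v w) ->
        (forall (a : k) u v w, f u (a *: v + w) = a *: f u v + f u w) ->
        (forall u s v, S s -> f (u * s) v = f u (s * v)) ->
        exists g : R1 -> V, klinear g /\ forall u v, g (t u v) = f u v) /\
  (forall z : R1, exists (m : nat) (us vs : 'I_m -> R),
        z = \sum_(j < m) t (us j) (vs j)) /\
  (forall u v w z, t u v * t w z = t (u * ES (v * w)) z) /\
  (1 : R1) = \sum_(i < n) t (xs i) (ys i) /\
  klinear ER /\
  (forall u v, ER (t u v) = lam *: (u * v)).

Definition free_right_basis_in (R R1 : algType k) (iota : R -> R1)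
    (P : R1 -> Prop) : Prop :=
  exists (m : nat) (b : 'I_m -> R1),
    [/\ forall j, P (b j),
        forall z : R1, exists c : 'I_m -> R, z = \sum_(j < m) b j * iota (c j)
      & forall c : 'I_m -> R, \sum_(j < m) b j * iota (c j) = 0 ->
          forall j, c j = 0].

Definition scalar_valued_on (R T : algType k) (f : R -> T) (P : R -> Prop) :=
  forall r, P r -> exists a : k, f r = a%:A.

Definition faithful_on (R T : algType k) (f : R -> T) (P : R -> Prop) :=
  (forall c, P c -> (forall c', P c' -> f (c * c') = 0) -> c = 0) /\
  (forall c, P c -> (forall c', P c' -> f (c' * c) = 0) -> c = 0).

Definition nakayama_on (R T : algType k) (f : R -> T) (P : R -> Prop)
    (q : R -> R) :=
  forall c, P c -> P (q c) /\ forall c', P c' -> f (q c * c') = f (c' * c).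

End BasicDefs.

From HB Require Import structures.
From mathcomp Require Import all_boot all_order all_algebra.
Import GRing.Theory.
Local Open Scope ring_scope.
Set Implicit Arguments. Unset Strict Implicit. Unset Printing Implicit Defensive.

(* All four identities are instances of one principle: the Nakayama
   automorphism of a faithful functional on a centralizer algebra is unique,
   so it suffices to check the defining identity of [q], [q_A] or [q_B] on the
   candidate.  On [B] the functionals [E_M1] and [F = E_M o E_M1] determine
   each other, since [E_M1] is scalar valued there and [E_M 1 = 1].  The other
   identities move [E_M1] across elements of [M1], i.e. they use that [E_M1] is
   an [M1]-bimodule map; this holds because the basic construction of a
   strongly separable extension is again strongly separable (with the same
   index constant), so [M ⊆ M1] has the quasi-basis the second construction
   is built from. *)

Section KLinear.
Variables (k : fieldType) (U V W : lmodType k) (f : U -> V).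
Hypothesis f_lin : klinear f.

Lemma klinearD u v : f (u + v) = f u + f v.
Proof. by have := f_lin 1 u v; rewrite !scale1r. Qed.

Lemma klinear0 : f 0 = 0.
Proof. by apply: (addrI (f 0)); rewrite -klinearD !addr0. Qed.

Lemma klinearZ a u : f (a *: u) = a *: f u.
Proof. by have := f_lin a u 0; rewrite addr0 klinear0 addr0. Qed.

Lemma klinearB u v : f (u - v) = f u - f v.
Proof. by rewrite klinearD -scaleN1r klinearZ scaleN1r. Qed.

Lemma klinear_sum (I : Type) (r : seq I) (P : pred I) (F : I -> U) :
  f (\sum_(i <- r | P i) F i) = \sum_(i <- r | P i) f (F i).
Proof. exact: (big_morph f klinearD klinear0). Qed.

Lemma klinear_comp (g : V -> W) : klinear g -> klinear (g \o f).
Proof. by move=> g_lin a u v; rewrite /= f_lin g_lin. Qed.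

End KLinear.

Section Centralizer.
Variables (k : fieldType) (R : algType k).
Implicit Types (P Q : R -> Prop) (u v : R).

Lemma centralizerB P u v :
  centralizer P u -> centralizer P v -> centralizer P (u - v).
Proof. by move=> Pu Pv s Ps; rewrite mulrBl mulrBr Pu // Pv. Qed.

Lemma centralizerM P u v :
  centralizer P u -> centralizer P v -> centralizer P (u * v).
Proof. by move=> Pu Pv s Ps; rewrite -mulrA Pv // !mulrA Pu. Qed.

Lemma centralizerS P Q u :
  (forall s, P s -> Q s) -> centralizer Q u -> centralizer P u.
Proof. by move=> PQ Qu s /PQ; apply: Qu. Qed.

End Centralizer.

Section Faithful.
Variables (k : fieldType) (R T : algType k) (f : R -> T) (P : R -> Prop).
Hypotheses (f_lin : klinear f) (f_faithful : faithful_on f (centralizer P)).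

Lemma faithful_centralizer_eq u v :
  centralizer P u -> centralizer P v ->
  (forall c, centralizer P c -> f (u * c) = f (v * c)) -> u = v.
Proof.
move=> Pu Pv fuv; apply/eqP; rewrite -subr_eq0; apply/eqP.
apply: f_faithful.1; first exact: centralizerB.
by move=> c Pc; rewrite mulrBl klinearB // fuv // subrr.
Qed.

Lemma nakayama_uniq q c u :
  nakayama_on f (centralizer P) q -> centralizer P c -> centralizer P u ->
  (forall c', centralizer P c' -> f (u * c') = f (c' * c)) -> q c = u.
Proof.
move=> q_nak Pc Pu fu; have [Pqc fqc] := q_nak c Pc.
by apply: faithful_centralizer_eq => // c' Pc'; rewrite fqc // fu.
Qed.

End Faithful.

Lemma scalar_valued_comp_inj (k : fieldType) (R S T : algType k)
    (f : R -> S) (g : S -> T) (P : R -> Prop) u v :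
  klinear g -> g 1 = 1 -> scalar_valued_on f P -> P u -> P v ->
  g (f u) = g (f v) -> f u = f v.
Proof.
move=> g_lin g1 f_scal /f_scal[a ->] /f_scal[b ->].
by rewrite !klinearZ // g1 => /(fmorph_inj (in_alg T)) ->.
Qed.

Section BasicConstruction.
Variables (k : fieldType) (R R1 : algType k) (S : R -> Prop) (ES : R -> R)
  (n : nat) (xs ys : 'I_n -> R) (lam : k) (t : R -> R -> R1) (ER : R1 -> R).
Hypothesis bc : basic_construction S ES xs ys lam t ER.
Hypothesis ss : strongly_separable S ES xs ys lam.

Local Notation i := (bc_incl t xs ys).
Local Notation xs1 := (fun j => lam^-1 *: t (xs j) 1).
Local Notation ys1 := (fun j => t 1 (ys j)).

Let t_linl w : klinear (t^~ w).
Proof. by case: bc => tl _ a u v; apply: tl. Qed.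
Let t_linr u : klinear (t u).
Proof. by case: bc => _ [tr _] a v w; apply: tr. Qed.
Let t_bal u s v : S s -> t (u * s) v = t u (s * v).
Proof. by case: bc => _ [_ [tb _]]; apply: tb. Qed.
Let t_span z : exists m (us vs : 'I_m -> R), z = \sum_(j < m) t (us j) (vs j).
Proof. by case: bc => _ [_ [_ [_ [ts _]]]]; apply: ts. Qed.
Let t_mul u v w z : t u v * t w z = t (u * ES (v * w)) z.
Proof. by case: bc => _ [_ [_ [_ [_ [tm _]]]]]; apply: tm. Qed.
Let t_one : 1 = \sum_(j < n) t (xs j) (ys j).
Proof. by case: bc => _ [_ [_ [_ [_ [_ [-> _]]]]]]. Qed.
Let ER_t u v : ER (t u v) = lam *: (u * v).
Proof. by case: bc => _ [_ [_ [_ [_ [_ [_ [_ ->]]]]]]]. Qed.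
Let ES_in r : S (ES r).
Proof. by case: ss. Qed.
Let ES1 : ES 1 = 1.
Proof. by case: ss => _ [_ [_ [-> _]]]. Qed.
Let quasi_basis_r r : \sum_(j < n) ES (r * xs j) * ys j = r.
Proof. by case: ss => _ [_ [_ [_ [-> _]]]]. Qed.
Let quasi_basis_l r : \sum_(j < n) xs j * ES (ys j * r) = r.
Proof. by case: ss => _ [_ [_ [_ [_ [-> _]]]]]. Qed.
Let sum_xsys : \sum_(j < n) xs j * ys j = lam^-1 *: 1.
Proof. by case: ss => _ [_ [_ [_ [_ [_ [-> _]]]]]]. Qed.
Let lam_neq0 : lam != 0.
Proof. by case: ss => _ [_ [_ [_ [_ [_ [_ ->]]]]]]. Qed.

Lemma bc_ER_linear : klinear ER.
Proof. by case: bc => _ [_ [_ [_ [_ [_ [_ [ER_lin _]]]]]]]. Qed.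

Lemma eq_on_tensors (V : zmodType) (f g : R1 -> V) :
  {morph f : u v / u + v} -> {morph g : u v / u + v} ->
  (forall u v, f (t u v) = g (t u v)) -> f =1 g.
Proof.
move=> fD gD fg z; have [m [us [vs ->]]] := t_span z.
have f0 : f 0 = 0 by apply: (addrI (f 0)); rewrite -fD !addr0.
have g0 : g 0 = 0 by apply: (addrI (g 0)); rewrite -gD !addr0.
by rewrite (big_morph f fD f0) (big_morph g gD g0); apply: eq_bigr.
Qed.

Lemma bc_incl_linear : klinear i.
Proof.
move=> a u v; rewrite /bc_incl scaler_sumr -big_split /=.
by apply: eq_bigr => j _; rewrite mulrDl -scalerAl t_linl.
Qed.

Lemma bc_incl_mull m u v : i m * t u v = t (m * u) v.
Proof.
rewrite /bc_incl mulr_suml; under eq_bigr do rewrite t_mul.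
rewrite -(klinear_sum (t_linl v)) -{2}(quasi_basis_l u) mulr_sumr.
by congr t; apply: eq_bigr => j _; rewrite !mulrA.
Qed.

Lemma bc_incl_mulr m u v : t u v * i m = t u (v * m).
Proof.
rewrite /bc_incl mulr_sumr; under eq_bigr do rewrite t_mul t_bal //.
rewrite -(klinear_sum (t_linr u)) -(quasi_basis_r (v * m)).
by congr t; apply: eq_bigr => j _; rewrite !mulrA.
Qed.

Lemma bc_inclM u v : i u * i v = i (u * v).
Proof.
by rewrite {2}/bc_incl mulr_sumr; apply: eq_bigr => j _; rewrite bc_incl_mull mulrA.
Qed.

Lemma bc_incl1 : i 1 = 1.
Proof. by rewrite t_one; apply: eq_bigr => j _; rewrite mul1r. Qed.

Lemma bc_ER1 : ER 1 = 1.
Proof.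
rewrite t_one (klinear_sum bc_ER_linear); under eq_bigr do rewrite ER_t.
by rewrite -scaler_sumr sum_xsys scalerA mulfV // scale1r.
Qed.

Lemma bc_ER_inclMl m z : ER (i m * z) = m * ER z.
Proof.
move: z; apply: eq_on_tensors.
- by move=> u v /=; rewrite mulrDr (klinearD bc_ER_linear).
- by move=> u v /=; rewrite (klinearD bc_ER_linear) mulrDr.
by move=> u v /=; rewrite bc_incl_mull !ER_t -scalerAr mulrA.
Qed.

Lemma bc_ER_inclMr m z : ER (z * i m) = ER z * m.
Proof.
move: z; apply: eq_on_tensors.
- by move=> u v /=; rewrite mulrDl (klinearD bc_ER_linear).
- by move=> u v /=; rewrite (klinearD bc_ER_linear) mulrDl.
by move=> u v /=; rewrite bc_incl_mulr !ER_t -scalerAl mulrA.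
Qed.

Lemma bc_quasi_basis_r r : \sum_(j < n) i (ER (r * xs1 j)) * ys1 j = r.
Proof.
move: r; apply: eq_on_tensors => [u v | // | u v] /=.
  rewrite -big_split /=; apply: eq_bigr => j _.
  by rewrite mulrDl (klinearD bc_ER_linear) (klinearD bc_incl_linear) mulrDl.
under eq_bigr do rewrite -scalerAr t_mul (klinearZ bc_ER_linear) ER_t scalerA
  mulVf // scale1r mulr1 bc_incl_mull mulr1 t_bal //.
by rewrite -(klinear_sum (t_linr u)) quasi_basis_r.
Qed.

Lemma bc_quasi_basis_l r : \sum_(j < n) xs1 j * i (ER (ys1 j * r)) = r.
Proof.
move: r; apply: eq_on_tensors => [u v | // | u v] /=.
  rewrite -big_split /=; apply: eq_bigr => j _.
  by rewrite mulrDr (klinearD bc_ER_linear) (klinearD bc_incl_linear) mulrDr.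
under eq_bigr do rewrite t_mul mul1r ER_t (klinearZ bc_incl_linear) -scalerAl
  -scalerAr scalerA mulVf // scale1r bc_incl_mulr mul1r -t_bal //.
by rewrite -(klinear_sum (t_linl v)) quasi_basis_l.
Qed.

Lemma basic_construction_strongly_separable :
  strongly_separable (fun z => exists m, z = i m) (fun z => i (ER z)) xs1 ys1 lam.
Proof.
split; first by move=> z; exists (ER z).
split; first exact: (klinear_comp bc_ER_linear bc_incl_linear).
split.
  move=> _ z _ [a ->] [b ->].
  by rewrite bc_ER_inclMr bc_ER_inclMl !bc_inclM.
split; first by rewrite bc_ER1 bc_incl1.
split; first exact: bc_quasi_basis_r.
split; first exact: bc_quasi_basis_l.
split=> //.
under eq_bigr do rewrite -scalerAl t_mul mulr1 ES1 mulr1.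
by rewrite -scaler_sumr -t_one.
Qed.

End BasicConstruction.

Theorem proposition3p9
  (k : fieldType) (M M1 M2 : algType k)
  (N : M -> Prop) (E : M -> M) (n : nat) (x y : 'I_n -> M) (lam : k)
  (t1 : M -> M -> M1) (EM : M1 -> M)
  (t2 : M1 -> M1 -> M2) (EM1 : M2 -> M1)
  (q : M2 -> M2) (qA : M1 -> M1) (qB qt : M2 -> M2) :
  is_subalg N ->
  strongly_separable N E x y lam ->
  (forall m, centralizer N m -> exists a : k, m = a%:A) ->
  basic_construction N E x y lam t1 EM ->
  basic_construction (fun z : M1 => exists m : M, z = bc_incl t1 x y m)
    (fun z : M1 => bc_incl t1 x y (EM z))
    (fun i => lam^-1 *: t1 (x i) 1) (fun i => t1 1 (y i)) lam t2 EM1 ->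
  let i1 := bc_incl t1 x y in
  let i2 := bc_incl t2 (fun i => lam^-1 *: t1 (x i) 1) (fun i => t1 1 (y i)) in
  let A := centralizer (fun z : M1 => exists m, N m /\ z = i1 m) in
  let B := centralizer (fun z : M2 => exists m, z = i2 (i1 m)) in
  let C := centralizer (fun z : M2 => exists m, N m /\ z = i2 (i1 m)) in
  let F := fun z : M2 => EM (EM1 z) in
  free_right_basis_in i1 A ->
  free_right_basis_in i2 B ->
  scalar_valued_on F C -> faithful_on F C ->
  scalar_valued_on EM A -> faithful_on EM A ->
  scalar_valued_on EM1 B -> faithful_on EM1 B ->
  (forall c, C c -> A (EM1 c)) ->
  nakayama_on F C q ->
  nakayama_on EM A qA ->
  nakayama_on EM1 B qB ->
  (forall b, B b -> B (qt b) /\ forall z : M2, F (qt b * z) = F (z * b)) ->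
  [/\ forall b, B b -> qB b = qt b /\ qt b = q b,
      forall a, A a -> i2 (qA a) = q (i2 a)
    & forall c, C c -> EM1 (q c) = qA (EM1 c)].
Proof.
move=> _ ss1 _ bc1 bc2 i1 i2 A B C F _ _ _ F_faith _ EM_faith EM1_scal EM1_faith
  EM1_A q_nak qA_nak qB_nak qt_nak.
have ss2 := basic_construction_strongly_separable bc1 ss1.
have [EM_lin EM1_lin] := (bc_ER_linear bc1, bc_ER_linear bc2).
have F_lin : klinear F := klinear_comp EM1_lin EM_lin.
have EM1_l := bc_ER_inclMl bc2 ss2; have EM1_r := bc_ER_inclMr bc2 ss2.
have B_C b : B b -> C b by apply: centralizerS => _ [m [_ ->]]; exists m.
have i2_C a : A a -> C (i2 a).
  by move=> Aa _ [m [Nm ->]]; rewrite !(bc_inclM bc2 ss2) Aa //; exists m.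
have qBt b : B b -> qB b = qt b.
  move=> Bb; have [Bqtb F_qtb] := qt_nak b Bb.
  apply: (nakayama_uniq EM1_lin EM1_faith qB_nak Bb Bqtb) => c Bc.
  apply: (scalar_valued_comp_inj EM_lin (bc_ER1 bc1 ss1) EM1_scal _ _ (F_qtb c));
    exact: centralizerM.
have qtq b : B b -> qt b = q b.
  move=> Bb; have [Bqtb F_qtb] := qt_nak b Bb; symmetry.
  by apply: (nakayama_uniq F_lin F_faith q_nak (B_C b Bb) (B_C _ Bqtb)) => c _.
split=> [b Bb | a Aa | c Cc]; first by rewrite qBt // qtq.
- have [AqAa EM_qAa] := qA_nak a Aa; symmetry.
  apply: (nakayama_uniq F_lin F_faith q_nak (i2_C a Aa) (i2_C _ AqAa)) => c Cc.
  by rewrite /F EM1_l EM_qAa -?EM1_r //; apply: EM1_A.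
- have [Cqc F_qc] := q_nak c Cc; symmetry.
  apply: (nakayama_uniq EM_lin EM_faith qA_nak (EM1_A c Cc) (EM1_A _ Cqc)) => a Aa.
  by rewrite -EM1_r -/(F _) F_qc /F ?EM1_l //; apply: i2_C.
Qed.
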